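(* Let $\Omega=(a_1,b_1)\times\cdots\times(a_n,b_n)\subset\mathbb{R}^n$ be a bounded box with admissible mesh size vector $h$. (i) The first eigenvalue of $-\Delta_h$ on $\Omega_h$ with zero Dirichlet boundary conditions on $\partial\Omega_h$ is simple and equals $$\lambda_{1,h}=\sum_{i=1}^n\frac{4}{h_i^2}\sin^2\Big(\frac{\pi h_i}{2(b_i-a_i)}\Big)<\sum_{i=1}^n\frac{\pi^2}{(b_i-a_i)^2}=:\lambda_1,$$ with eigenfunction $\phi_{1,h}(x)=\prod_{i=1}^n\sin\frac{\pi(x_i-a_i)}{b_i-a_i}>0$ for $x\in\Omega_h$. (ii) Let $t>0$ be such that $\sum_{x\in\Omega_h}t\,\phi_{1,h}(x)\,\mathbf{h}=1$. Then $t\,\phi_{1,h}(x)\ge\frac{2^n}{|\Omega|^2}\operatorname{dist}(x,\partial\Omega_h)^n$ for all $x\in\Omega_h$.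
   Context: Admissible mesh: $h=(h_1,\dots,h_n)$, $h_i>0$, $a_i=k_ih_i$, $b_i=l_ih_i$, $k_i,l_i\in\mathbb{Z}$, $l_i-k_i>1$. $\mathbb{R}^n_h=\{(h_1z_1,\dots,h_nz_n):z_i\in\mathbb{Z}\}$, $\Omega_h=\Omega\cap\mathbb{R}^n_h$, $\partial\Omega_h=\partial\Omega\cap\mathbb{R}^n_h$, $\mathbf{h}=h_1\cdots h_n$, $|\Omega|=\prod_i(b_i-a_i)$. $\Delta_hu(x)=\sum_i\frac{u(x+h_ie_i)-2u(x)+u(x-h_ie_i)}{h_i^2}$. $\operatorname{dist}(x,\partial\Omega_h)$ is the Euclidean distance from $x$ to the set $\partial\Omega_h$. *)

From HB Require Import structures.
From mathcomp Require Import all_boot all_order all_algebra.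
From mathcomp Require Import all_classical all_reals all_analysis.
Set Implicit Arguments. Unset Strict Implicit. Unset Printing Implicit Defensive.
Import Order.TTheory GRing.Theory Num.Theory.
Local Open Scope ring_scope.
Local Open Scope classical_set_scope.

Section Grid.
Variables (R : realType) (n : nat) (h a b : 'I_n -> R).

Definition point := {ffun 'I_n -> R}.

Definition shift (x : point) (i : 'I_n) (s : R) : point :=
  [ffun j => x j + (if j == i then s else 0)].

Definition in_lattice (x : point) : Prop :=
  forall i, exists z : int, x i = z%:~R * h i.

Definition Omega_h : set point :=
  [set x | in_lattice x /\ forall i, a i < x i < b i].

Definition bdry_h : set point :=
  [set x | in_lattice x /\ (forall i, a i <= x i <= b i) /\
           exists i, x i = a i \/ x i = b i].

Definition lap_h (u : point -> R) (x : point) : R :=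
  \sum_(i < n) (u (shift x i (h i)) - 2 * u x + u (shift x i (- h i))) / h i ^+ 2.

Definition dirichlet_eigenpair (lam : R) (u : point -> R) : Prop :=
  (forall x, Omega_h x -> - lap_h u x = lam * u x) /\
  (forall x, bdry_h x -> u x = 0) /\
  (exists x, Omega_h x /\ u x != 0).

Definition lambda1h : R :=
  \sum_(i < n) 4 / h i ^+ 2 * sin (pi * h i / (2 * (b i - a i))) ^+ 2.

Definition lambda1 : R := \sum_(i < n) pi ^+ 2 / (b i - a i) ^+ 2.

Definition phi1h (x : point) : R :=
  \prod_(i < n) sin (pi * (x i - a i) / (b i - a i)).

Definition hvol : R := \prod_(i < n) h i.
Definition box_vol : R := \prod_(i < n) (b i - a i).

Definition eucl_dist (x y : point) : R := Num.sqrt (\sum_(i < n) (x i - y i) ^+ 2).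

Definition dist_bdry (x : point) : R :=
  inf [set d | exists2 y, bdry_h y & d = eucl_dist x y].

End Grid.

(* The one-dimensional modes [sin (pi (t - a) / (b - a))] are eigenvectors of
   the second difference operator, because of the identity
   [sin (t + 2u) - 2 sin t + sin (t - 2u) = - 4 sin^2 u sin t]; their tensor
   product [phi1h] is therefore an eigenvector of [- Delta_h] with eigenvalue
   [lambda1h], and [sin u < u] gives [lambda1h < lambda1].
   Since [phi1h] is positive inside and vanishes on the boundary, a discrete
   maximum principle applies to any eigenvector [u]: with [c] the largest value
   of [u / phi1h], the function [v = c phi1h - u] is nonnegative and vanishes
   at an interior point [x0], so [Delta_h v (x0) >= 0], which forces the
   eigenvalue of [u] to be at least [lambda1h]; for the eigenvalue [lambda1h]
   itself [Delta_h v = - lambda1h v], so [v] vanishes at every neighbour of a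
   zero and, the grid being connected, everywhere.
   For (ii), the normalisation gives [t |Omega| >= 1] because [phi1h <= 1] and
   [Omega_h] has at most [|Omega| / h] points, while Jordan's inequality
   [sin y >= 2 y / pi] on [[0, pi/2]] bounds each factor of [phi1h] from below
   by [2 dist(x, dOmega_h) / (b_i - a_i)]. *)
From HB Require Import structures.
From mathcomp Require Import all_boot all_order all_algebra.
From mathcomp Require Import all_classical all_reals all_analysis.
From mathcomp Require Import ring lra zify.
Import numFieldNormedType.Exports.
Import Order.TTheory GRing.Theory Num.Theory.
Local Open Scope ring_scope.
Local Open Scope classical_set_scope.

Section SinBounds.
Context {R : realType}.
Implicit Types (x y s t u D L : R).

Lemma sin_mvt {x y} : x < y ->
  exists2 c, x < c < y & sin y - sin x = cos c * (y - x).
Proof.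
move=> xy; have [] := @MVT R sin cos _ _ xy (fun c _ => is_derive_sin c).
  exact/continuous_subspaceT/continuous_sin.
by move=> c; rewrite in_itv; exists c.
Qed.

Lemma sin_lt_id y : 0 < y -> sin y < y.
Proof.
move=> y0; have [y2|y2] := ltP 2 y.
  by apply: le_lt_trans (sin_le1 _) _; apply: lt_trans y2; rewrite ltr1n.
have [c /andP[c0 cy]] := sin_mvt y0; rewrite sin0 !subr0 => ->.
rewrite gtr_pMl // lt_neqAle cos_le1 andbT; apply/negP => /eqP cos_c1.
have : sin c == 0 by rewrite -norm_cos_eq1 cos_c1 normr1.
by rewrite gt_eqF // sin2_gt0 // c0 (lt_le_trans cy y2).
Qed.

(* Jordan's inequality, from the monotonicity of [cos] on [[0, pi]]. *)
Lemma jordan_sin_ge y : 0 <= y <= pi / 2 -> 2 * y / pi <= sin y.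
Proof.
move=> /andP[y0 yp]; have pi0 : 0 < pi :> R := pi_gt0 R.
move: y0; rewrite le_eqVlt => /predU1P[<-|y0]; first by rewrite sin0 mulr0 mul0r.
move: yp; rewrite le_eqVlt => /predU1P[->|yp].
  (* [field] unfolds [pi] and then cannot discharge [pi != 0]: abstract it. *)
  have -> : 2 * (pi / 2) / pi = 1 :> R.
    by move: (pi : R) pi0 => p p0; field; rewrite lt0r_neq0.
  by rewrite sin_pihalf.
rewrite leNgt; apply/negP => sin_lt.
have [c1 /andP[c10 c1y]] := sin_mvt y0; rewrite sin0 !subr0 => E1.
have [c2 /andP[c2y c2p]] := sin_mvt yp; rewrite sin_pihalf => E2.
have cos_c1 : cos c1 < 2 / pi by rewrite -(ltr_pM2r y0) -E1 mulrAC.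
have cos_c2 : 2 / pi < cos c2.
  have d0 : 0 < pi / 2 - y by rewrite subr_gt0.
  rewrite -(ltr_pM2r d0) -E2.
  have -> : 2 / pi * (pi / 2 - y) = 1 - 2 * y / pi.
    by move: (pi : R) pi0 => p p0; field; rewrite lt0r_neq0.
  by rewrite ltrD2l ltrN2.
have pi2_le : pi / 2 <= pi :> R by lra.
have : cos c2 < cos c1.
  rewrite ltr_cos ?in_itv /= ?(lt_trans c1y c2y) //.
  - by rewrite (ltW c10) (le_trans (ltW (lt_trans c1y yp)) pi2_le).
  - by rewrite (ltW (lt_trans c10 (lt_trans c1y c2y))) (le_trans (ltW c2p)).
by move=> cos_lt; have := lt_trans cos_c2 (lt_trans cos_lt cos_c1); rewrite ltxx.
Qed.

Lemma sin_piB x : sin (pi - x) = sin x.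
Proof. by rewrite sinB sinpi cospi mul0r mulN1r sub0r opprK. Qed.

Lemma sin_frac_ge D s L : 0 < L -> 0 <= D -> D <= s -> D <= L - s ->
  2 * D / L <= sin (pi * s / L).
Proof.
move=> L0 D0 Ds DL; have pi0 : 0 < pi :> R := pi_gt0 R.
wlog sL : s Ds DL / s <= L / 2.
  move=> half_case; have [|sL] := leP s (L / 2); first exact: half_case.
  have -> : pi * s / L = pi - pi * (L - s) / L by field; rewrite lt0r_neq0.
  by rewrite sin_piB; apply: half_case; lra.
have s0 : 0 <= s := le_trans D0 Ds.
apply: (le_trans _ (jordan_sin_ge _ _)); last first.
  apply/andP; split; first by rewrite divr_ge0 ?mulr_ge0 // ltW.
  by rewrite -mulrA ler_pM2l // ler_pdivrMr //; lra.
have -> : 2 * (pi * s / L) / pi = 2 * s / L.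
  by move: (pi : R) pi0 => p p0; field; rewrite !lt0r_neq0.
by rewrite ler_pM2r ?invr_gt0 // ler_pM2l.
Qed.

Lemma sin_second_difference t u :
  sin (t + u *+ 2) - 2 * sin t + sin (t - u *+ 2) = - (4 * sin u ^+ 2) * sin t.
Proof. by rewrite sinD sinB cos_mulr2n cos2sin2; ring. Qed.

Lemma discrete_eigenvalue_lt s L : 0 < s <= L ->
  4 / s ^+ 2 * sin (pi * s / (2 * L)) ^+ 2 < pi ^+ 2 / L ^+ 2.
Proof.
move=> /andP[s0 sL]; have pi0 : 0 < pi :> R := pi_gt0 R.
have L0 := lt_le_trans s0 sL.
set u := pi * s / (2 * L).
have u0 : 0 < u by rewrite divr_gt0 ?mulr_gt0.
have u_le_pi : u <= pi.
  by rewrite /u -mulrA ler_piMr ?(ltW pi0) // ler_pdivrMr ?mulr_gt0 //; lra.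
have sin_u0 : 0 <= sin u by apply: sin_ge0_pi; rewrite ltW.
have sin_u_lt : sin u ^+ 2 < u ^+ 2 by rewrite ltrXn2r // ?sin_lt_id // ltW.
apply: (@lt_le_trans _ _ (4 / s ^+ 2 * u ^+ 2)).
  by rewrite ltr_pM2l // divr_gt0 // exprn_gt0.
have -> : 4 / s ^+ 2 * u ^+ 2 = pi ^+ 2 / L ^+ 2.
  by rewrite /u; field; rewrite !lt0r_neq0.
exact: lexx.
Qed.

End SinBounds.

Section GridFunctions.
Context {R : realType} {n : nat} {h a b : 'I_n -> R}.

Lemma lap_hB c (u v : point R n -> R) x :
  lap_h h (fun y => c * u y - v y) x = c * lap_h h u x - lap_h h v x.
Proof. by rewrite /lap_h mulr_sumr -sumrB; apply: eq_bigr => i _; ring. Qed.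

Lemma lap_hN (u : point R n -> R) x :
  lap_h h (fun y => - u y) x = - lap_h h u x.
Proof. by rewrite /lap_h -sumrN; apply: eq_bigr => i _; ring. Qed.

Lemma lap_h_root (v : point R n -> R) y : v y = 0 ->
  lap_h h v y = \sum_i (v (shift y i (h i)) + v (shift y i (- h i))) / h i ^+ 2.
Proof. by move=> v0; apply: eq_bigr => i _; rewrite v0 mulr0 subr0. Qed.

Lemma dirichlet_eigenpairN {lam u} : dirichlet_eigenpair h a b lam u ->
  dirichlet_eigenpair h a b lam (fun y => - u y).
Proof.
move=> [eq_u [bdry_u [x [Ox ux]]]]; split; [|split].
- by move=> y Oy; rewrite lap_hN opprK mulrN -eq_u // opprK.
- by move=> y By; rewrite bdry_u // oppr0.
- by exists x; rewrite oppr_eq0.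
Qed.

Lemma phi1h_le1 x : phi1h a b x <= 1.
Proof.
apply: le_trans (ler_norm _) _; rewrite /phi1h normr_prod.
apply: (@le_trans _ _ (\prod_(i < n) (1 : R))); last by rewrite big1.
by apply: ler_prod => i _; rewrite normr_ge0 sin_max.
Qed.

Lemma eucl_dist_shift (x : point R n) i s : eucl_dist x (shift x i s) = `|s|.
Proof.
rewrite /eucl_dist (bigD1 i) //= big1 => [|j /negbTE ji]; last first.
  by rewrite ffunE ji addr0 subrr expr0n.
by rewrite addr0 ffunE eqxx opprD addNKr sqrrN sqrtr_sqr.
Qed.

Lemma dist_bdry_le_eucl_dist x {y} :
  bdry_h h a b y -> dist_bdry h a b x <= eucl_dist x y.
Proof.
move=> By.
have lb : has_lbound [set d | exists2 z, bdry_h h a b z & d = eucl_dist x z].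
  by exists 0 => d [z _ ->]; apply: sqrtr_ge0.
by apply: (ge_inf lb); exists y.
Qed.

End GridFunctions.

Section Box.
Context {R : realType} {n : nat} {h a b : 'I_n -> R} {k l : 'I_n -> int}.
Hypothesis h_gt0 : forall i, 0 < h i.
Hypothesis aE : forall i, a i = (k i)%:~R * h i.
Hypothesis bE : forall i, b i = (l i)%:~R * h i.
Hypothesis kl_gt1 : forall i, 1 < l i - k i.

Local Notation Omega := (Omega_h h a b).
Local Notation bdry := (bdry_h h a b).
Local Notation closure := (Omega `|` bdry).
Local Notation phi := (phi1h a b).
Local Notation lambda := (lambda1h h a b).

Lemma box_sideE i : b i - a i = (l i - k i)%:~R * h i.
Proof. by rewrite aE bE -mulrBl -intrB. Qed.

Lemma step_le_box_side i : h i <= b i - a i.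
Proof. by rewrite box_sideE ler_peMl ?ltW // ltr1z; have := kl_gt1 i; lia. Qed.

Lemma box_side_gt0 i : 0 < b i - a i.
Proof. exact: lt_le_trans (h_gt0 i) (step_le_box_side i). Qed.

Lemma ltr_lattice (z w : int) i : (z%:~R * h i < w%:~R * h i) = (z < w).
Proof. by rewrite ltr_pM2r // ltr_int. Qed.

Lemma ler_lattice (z w : int) i : (z%:~R * h i <= w%:~R * h i) = (z <= w).
Proof. by rewrite ler_pM2r // ler_int. Qed.

Definition lattice_coord (y : point R n) i : int := Num.floor (y i / h i).

Definition lattice_pt (z : 'I_n -> int) : point R n := [ffun j => (z j)%:~R * h j].

Lemma lattice_pt_in_lattice z : in_lattice h (lattice_pt z).
Proof. by move=> j; exists (z j); rewrite ffunE. Qed.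

Lemma lattice_coordE y i : in_lattice h y -> y i = (lattice_coord y i)%:~R * h i.
Proof.
by move=> /(_ i)[z yE]; rewrite /lattice_coord yE mulfK ?gt_eqF // intrKfloor.
Qed.

Lemma lattice_coordK {y} : in_lattice h y -> lattice_pt (lattice_coord y) = y.
Proof. by move=> y_lat; apply/ffunP => j; rewrite ffunE -lattice_coordE. Qed.

Lemma lattice_ptK z j : lattice_coord (lattice_pt z) j = z j.
Proof. by rewrite /lattice_coord ffunE mulfK ?gt_eqF // intrKfloor. Qed.

Lemma Omega_h_lattice_coord {y} i : Omega y -> k i < lattice_coord y i < l i.
Proof.
move=> [y_lat y_in]; have := y_in i.
by rewrite (lattice_coordE y i y_lat) aE bE !ltr_lattice.
Qed.

Lemma Omega_h_lattice_pt z : (forall j, k j < z j < l j) -> Omega (lattice_pt z).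
Proof.
move=> z_in; split; first exact: lattice_pt_in_lattice.
by move=> j; rewrite ffunE aE bE !ltr_lattice.
Qed.

Lemma shift_lattice_pt z i (d : int) :
  shift (lattice_pt z) i (d%:~R * h i) =
  lattice_pt (fun j => if j == i then z j + d else z j).
Proof.
apply/ffunP => j; rewrite !ffunE; case: (j =P i) => [->|_]; last by rewrite addr0.
by rewrite rmorphD /= mulrDl.
Qed.

Lemma closure_of_lattice x : in_lattice h x -> (forall i, a i <= x i <= b i) ->
  closure x.
Proof.
move=> x_lat x_in; have [x_int|] := boolP [forall i, (a i < x i) && (x i < b i)].
  by left; split => // i; exact: (forallP x_int).
rewrite negb_forall => /existsP[i]; rewrite negb_and -!leNgt => x_face.
right; split => //; split => //; exists i.
have /andP[lo hi] := x_in i.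
by case/orP: x_face => x_face; [left|right]; apply/eqP; rewrite eq_le ?lo ?hi ?x_face.
Qed.

Lemma shift_Omega_h x i s : Omega x -> s = h i \/ s = - h i -> closure (shift x i s).
Proof.
move=> Ox hs.
have [d [d_pm ->]] : exists d : int, (d = 1 \/ d = -1) /\ s = d%:~R * h i.
  by case: hs => ->; [exists 1 | exists (-1)];
     rewrite ?rmorphN /= ?rmorph1 ?mulN1r ?mul1r; auto.
rewrite -(lattice_coordK Ox.1) shift_lattice_pt.
apply: closure_of_lattice => [|j]; first exact: lattice_pt_in_lattice.
rewrite ffunE aE bE !ler_lattice; have := Omega_h_lattice_coord j Ox.
by case: (j == i); lia.
Qed.

Definition nsteps i : nat := `|l i - k i|%N.

Lemma nstepsE i : (nsteps i)%:Z = l i - k i.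
Proof. by rewrite /nsteps; have := kl_gt1 i; lia. Qed.

(* A grid point is encoded by its offsets [f i] from [a i], in units of
   [h i]; the offsets [0 < f i < nsteps i] are those of [Omega_h]. *)
Local Notation box_index := {dffun forall i : 'I_n, 'I_(nsteps i)}.

Definition interior_index : {set box_index} :=
  [set f : box_index | [forall i, (0 < f i)%N]].

Definition index_pt (f : box_index) : point R n :=
  lattice_pt (fun i => k i + (f i : nat)%:Z).

Lemma card_box_index : #|{: box_index}| = (\prod_i nsteps i)%N.
Proof.
rewrite card_dep_ffun foldrE big_image /=.
by apply: eq_bigr => i _; rewrite card_ord.
Qed.

Lemma index_pt_inj : injective index_pt.
Proof.
move=> f g /ffunP fg; apply/ffunP => i; have := fg i; rewrite !ffunE.
move/(mulIf (lt0r_neq0 (h_gt0 i)))/eqP; rewrite eqr_int => /eqP fg_i.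
by apply: val_inj => /=; lia.
Qed.

Lemma Omega_h_index_pt : Omega = index_pt @` [set f | f \in interior_index].
Proof.
apply/seteqP; split => [x Ox|_ [f f_int <-]]; last first.
  move: f_int; rewrite /= inE => /forallP f_pos.
  apply: Omega_h_lattice_pt => i; have := f_pos i.
  (* The occurrences of [f i] differ in their type annotations: name them
     once so that [lia] sees a single atom. *)
  have := ltn_ord (f i); have := nstepsE i; set j := nat_of_ord (f i).
  lia.
have c_lt i : (`|lattice_coord x i - k i| < nsteps i)%N.
  by have := Omega_h_lattice_coord i Ox; rewrite /nsteps; lia.
exists (finfun (fun i => Ordinal (c_lt i)) : box_index).
  rewrite /= inE; apply/forallP => i; rewrite ffunE /=.
  by have := Omega_h_lattice_coord i Ox; lia.
rewrite /index_pt -[RHS](lattice_coordK Ox.1); congr lattice_pt; apply/funext => i.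
by rewrite ffunE /=; have := Omega_h_lattice_coord i Ox; lia.
Qed.

Lemma Omega_h_nonempty : exists x, Omega x.
Proof.
exists (lattice_pt (fun i => k i + 1)); apply: Omega_h_lattice_pt => i.
by have := kl_gt1 i; lia.
Qed.

Lemma Omega_h_argmax (F : point R n -> R) :
  exists2 x0, Omega x0 & forall x, Omega x -> F x <= F x0.
Proof.
have [x Ox] := Omega_h_nonempty; rewrite Omega_h_index_pt in Ox.
have [f f_int _] := Ox; clear x Ox.
case: (@arg_maxP _ _ _ _ (fun f => f \in interior_index) (F \o index_pt) f_int).
move=> f0 f0_int f0_max.
exists (index_pt f0); first by rewrite Omega_h_index_pt; exists f0.
by move=> x; rewrite Omega_h_index_pt => -[g g_int <-]; apply: f0_max.
Qed.

Lemma fsbig_Omega_h_le (F : point R n -> R) c : 0 <= c ->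
  (forall x, Omega x -> F x <= c) ->
  \sum_(x \in Omega) F x <= (\prod_i nsteps i)%:R * c.
Proof.
move=> c0 F_le; rewrite Omega_h_index_pt fsbig_image; last first.
  by move=> f g _ _; apply: index_pt_inj.
have -> : [set f | f \in interior_index] = [set` enum interior_index].
  by apply/seteqP; split => f; rewrite /= mem_enum.
rewrite -fsbig_seq ?enum_uniq // big_enum /=.
apply: (@le_trans _ _ (\sum_(f in interior_index) c)).
  by apply: ler_sum => f f_int; apply: F_le; rewrite Omega_h_index_pt; exists f.
rewrite sumr_const -[c *+ _]mulr_natl; apply: ler_wpM2r => //.
by rewrite ler_nat -card_box_index max_card.
Qed.

Definition lattice_l1 (x y : point R n) : nat :=
  (\sum_j `|lattice_coord x j - lattice_coord y j|)%N.

Lemma Omega_h_step {x0 y} : Omega x0 -> Omega y -> y != x0 ->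
  exists i s y', [/\ s = h i \/ s = - h i, Omega y', y = shift y' i s &
    (lattice_l1 y' x0 < lattice_l1 y x0)%N].
Proof.
move=> Ox0 Oy y_neq.
have [i c_neq] : exists i, lattice_coord y i != lattice_coord x0 i.
  apply/existsP; move: y_neq; apply: contraNT; rewrite negb_exists => /forallP c_eq.
  apply/eqP; rewrite -(lattice_coordK Oy.1) -(lattice_coordK Ox0.1).
  by congr lattice_pt; apply/funext => j; apply/eqP/negPn; exact: c_eq.
pose d : int := if lattice_coord y i < lattice_coord x0 i then 1 else -1.
pose z j := if j == i then lattice_coord y j + d else lattice_coord y j.
have y_i := Omega_h_lattice_coord i Oy; have x0_i := Omega_h_lattice_coord i Ox0.
exists i, ((- d)%:~R * h i), (lattice_pt z); split.
- rewrite /d; case: ifP => _; [right | left].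
    by rewrite rmorphN /= rmorph1 mulN1r.
  by rewrite opprK rmorph1 mul1r.
- apply: Omega_h_lattice_pt => j; rewrite /z; case: (j =P i) => [->|_].
    by rewrite /d; case: ifP; lia.
  exact: Omega_h_lattice_coord.
- rewrite shift_lattice_pt -[LHS](lattice_coordK Oy.1); congr lattice_pt.
  by apply/funext => j; rewrite /z; case: (j =P i) => // ->; rewrite addrK.
rewrite /lattice_l1 (bigD1 i) //= [X in (_ < X)%N](bigD1 i) //= lattice_ptK /z eqxx.
under eq_bigr => j j_neq do rewrite lattice_ptK /z (negbTE j_neq).
by rewrite ltn_add2r /d; case: ifP; lia.
Qed.

Lemma Omega_h_connected_ind (P : point R n -> Prop) x0 : Omega x0 -> P x0 ->
  (forall y i s, Omega y -> P y -> s = h i \/ s = - h i ->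
     Omega (shift y i s) -> P (shift y i s)) ->
  forall y, Omega y -> P y.
Proof.
move=> Ox0 Px0 P_step y Oy.
have [N] := ubnP (lattice_l1 y x0).
elim: N y Oy => [|N IH] y Oy; first by rewrite ltn0.
have [-> _|y_neq y_lt] := eqVneq y x0; first exact: Px0.
have [i [s [y' [hs Oy' y_eq y'_lt]]]] := Omega_h_step Ox0 Oy y_neq.
by rewrite y_eq; apply: P_step => //; [apply: IH => //; lia | rewrite -y_eq].
Qed.

Definition phi1h_factor i (t : R) : R := sin (pi * (t - a i) / (b i - a i)).

Lemma phi1h_bigD1 x i :
  phi x = phi1h_factor i (x i) * \prod_(j < n | j != i) phi1h_factor j (x j).
Proof. by rewrite /phi1h (bigD1 i). Qed.

Lemma phi1h_shift x i s : phi (shift x i s) =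
  phi1h_factor i (x i + s) * \prod_(j < n | j != i) phi1h_factor j (x j).
Proof.
rewrite (phi1h_bigD1 _ i) ffunE eqxx; congr (_ * _).
by apply: eq_bigr => j /negbTE ji; rewrite ffunE ji addr0.
Qed.

Lemma phi1h_gt0 x : Omega x -> 0 < phi x.
Proof.
move=> [_ x_in]; apply: prodr_gt0 => i _; apply: sin_gt0_pi.
have /andP[lo hi] := x_in i; have side := box_side_gt0 i.
have pi0 : 0 < pi :> R := pi_gt0 R.
apply/andP; split; first by rewrite divr_gt0 ?mulr_gt0 // subr_gt0.
by rewrite ltr_pdivrMr // ltr_pM2l //; lra.
Qed.

Lemma phi1h_bdry x : bdry x -> phi x = 0.
Proof.
move=> [_ [_ [i x_face]]]; rewrite (phi1h_bigD1 _ i) /phi1h_factor.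
case: x_face => ->; first by rewrite subrr mulr0 mul0r sin0 mul0r.
by rewrite mulfK ?sinpi ?mul0r // lt0r_neq0 // box_side_gt0.
Qed.

Lemma lap_h_phi1h x : - lap_h h phi x = lambda * phi x.
Proof.
rewrite /lap_h /lambda1h -sumrN mulr_suml; apply: eq_bigr => i _.
rewrite !phi1h_shift (phi1h_bigD1 x i) /phi1h_factor.
have side0 : b i - a i != 0 by rewrite gt_eqF // box_side_gt0.
have -> : pi * (x i + h i - a i) / (b i - a i) =
    pi * (x i - a i) / (b i - a i) + (pi * h i / (2 * (b i - a i))) *+ 2.
  by rewrite mulr2n; field.
have -> : pi * (x i + - h i - a i) / (b i - a i) =
    pi * (x i - a i) / (b i - a i) - (pi * h i / (2 * (b i - a i))) *+ 2.
  by rewrite mulr2n; field.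
set t := pi * (x i - a i) / _; set u := pi * h i / _; set P := \prod_(j | _) _.
have -> : sin (t + u *+ 2) * P - 2 * (sin t * P) + sin (t - u *+ 2) * P =
    - (4 * sin u ^+ 2) * sin t * P by rewrite -sin_second_difference; ring.
have hi0 : h i != 0 by rewrite gt_eqF.
by field.
Qed.

Lemma phi1h_dirichlet_eigenpair : dirichlet_eigenpair h a b lambda phi.
Proof.
split; [by move=> x _; exact: lap_h_phi1h | split; first exact: phi1h_bdry].
have [x Ox] := Omega_h_nonempty.
by exists x; split; rewrite // gt_eqF ?phi1h_gt0.
Qed.

Lemma lambda1h_lt_lambda1 : (0 < n)%N -> lambda < lambda1 a b.
Proof.
move=> n_gt0; apply: ltr_sum.
  by apply/hasP; exists (Ordinal n_gt0); rewrite ?mem_index_enum.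
move=> i _; apply: discrete_eigenvalue_lt.
by rewrite h_gt0 step_le_box_side.
Qed.

Lemma shift_Omega_h_ge0 {v : point R n -> R} {y} i :
  (forall x, closure x -> 0 <= v x) -> Omega y ->
  0 <= v (shift y i (h i)) /\ 0 <= v (shift y i (- h i)).
Proof.
by move=> v_ge0 Oy; split; apply: v_ge0; apply: shift_Omega_h => //; [left|right].
Qed.

Lemma lap_h_min_ge0 {v : point R n -> R} {y} :
  (forall x, closure x -> 0 <= v x) -> Omega y -> v y = 0 -> 0 <= lap_h h v y.
Proof.
move=> v_ge0 Oy vy0; rewrite lap_h_root //; apply: sumr_ge0 => i _.
by have [? ?] := shift_Omega_h_ge0 i v_ge0 Oy; rewrite divr_ge0 ?sqr_ge0 ?addr_ge0.
Qed.

Lemma lap_h_min_eq0 (v : point R n -> R) y i :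
  (forall x, closure x -> 0 <= v x) -> Omega y -> v y = 0 -> lap_h h v y = 0 ->
  v (shift y i (h i)) = 0 /\ v (shift y i (- h i)) = 0.
Proof.
move=> v_ge0 Oy vy0; rewrite lap_h_root //.
have term_ge0 j :
    true -> 0 <= (v (shift y j (h j)) + v (shift y j (- h j))) / h j ^+ 2.
  by have [? ?] := shift_Omega_h_ge0 j v_ge0 Oy; rewrite divr_ge0 ?sqr_ge0 ?addr_ge0.
move=> /(psumr_eq0P term_ge0)/(_ i isT)/eqP.
rewrite mulf_eq0 invr_eq0 expf_eq0 (gt_eqF (h_gt0 i)) andbF orbF.
have [? ?] := shift_Omega_h_ge0 i v_ge0 Oy.
by rewrite paddr_eq0 // => /andP[/eqP -> /eqP ->].
Qed.

Lemma eigenpair_le_multiple {lam u} : dirichlet_eigenpair h a b lam u ->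
  exists c, exists2 x0, Omega x0 &
    (forall x, closure x -> 0 <= c * phi x - u x) /\ u x0 = c * phi x0.
Proof.
move=> [_ [u_bdry _]].
have [x0 Ox0 x0_max] := Omega_h_argmax (fun x => u x / phi x).
exists (u x0 / phi x0), x0 => //.
split; last by rewrite divfK // lt0r_neq0 // phi1h_gt0.
move=> x [Ox|Bx]; last by rewrite (u_bdry x Bx) (phi1h_bdry x Bx) mulr0 subr0.
by rewrite subr_ge0 -ler_pdivrMr ?phi1h_gt0 //; apply: x0_max.
Qed.

Lemma lap_h_multiple_sub {lam u c y} :
  dirichlet_eigenpair h a b lam u -> Omega y ->
  lap_h h (fun x => c * phi x - u x) y = lam * u y - lambda * (c * phi y).
Proof.
move=> [eq_u _] Oy; rewrite lap_hB.
rewrite -[lap_h h u y]opprK eq_u // -[lap_h h phi y]opprK lap_h_phi1h; ring.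
Qed.

Lemma lambda1h_le_eigenvalue_pos {lam u} : dirichlet_eigenpair h a b lam u ->
  (exists2 x, Omega x & 0 < u x) -> lambda <= lam.
Proof.
move=> E [x Ox ux_gt0]; have [c [x0 Ox0 [v_ge0 ux0]]] := eigenpair_le_multiple E.
have c_gt0 : 0 < c.
  have := v_ge0 x (or_introl Ox); rewrite subr_ge0 => /(lt_le_trans ux_gt0).
  by rewrite pmulr_lgt0 // phi1h_gt0.
have ux0_gt0 : 0 < u x0 by rewrite ux0 mulr_gt0 // phi1h_gt0.
have v_x0 : c * phi x0 - u x0 = 0 by rewrite ux0 subrr.
have := lap_h_min_ge0 (v := fun x => c * phi x - u x) v_ge0 Ox0 v_x0.
by rewrite (lap_h_multiple_sub E Ox0) -ux0 -mulrBl pmulr_lge0 // subr_ge0.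
Qed.

Lemma lambda1h_le_eigenvalue lam u : dirichlet_eigenpair h a b lam u -> lambda <= lam.
Proof.
move=> E; have [x [Ox ux]] := E.2.2.
have [u_lt0|u_gt0|u0] := ltrgtP (u x) 0; last by rewrite u0 eqxx in ux.
  apply: lambda1h_le_eigenvalue_pos (dirichlet_eigenpairN E) _.
  by exists x; rewrite ?oppr_gt0.
by apply: lambda1h_le_eigenvalue_pos E _; exists x.
Qed.

Lemma dirichlet_eigenspace_lambda1h u : dirichlet_eigenpair h a b lambda u ->
  exists c : R, forall x, closure x -> u x = c * phi x.
Proof.
move=> E; have [c [x0 Ox0 [v_ge0 ux0]]] := eigenpair_le_multiple E.
exists c; pose v x := c * phi x - u x.
have v0 : forall y, Omega y -> v y = 0.
  apply: (Omega_h_connected_ind (fun y => v y = 0) _ Ox0).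
    by rewrite /v ux0 subrr.
  move=> y i s Oy vy0 hs _.
  have lap_v0 : lap_h h v y = 0.
    by rewrite (lap_h_multiple_sub E Oy) (subr0_eq vy0) subrr.
  by have [? ?] := @lap_h_min_eq0 v y i v_ge0 Oy vy0 lap_v0; case: hs => ->.
move=> x [Ox|Bx]; last by rewrite phi1h_bdry // mulr0; exact: E.2.1.
by apply/eqP; rewrite eq_sym -subr_eq0 -/(v x) v0.
Qed.

Lemma box_volE : box_vol a b = (\prod_i nsteps i)%:R * hvol h.
Proof.
rewrite /box_vol /hvol natr_prod -big_split /=; apply: eq_bigr => i _.
by rewrite box_sideE -nstepsE -pmulrn.
Qed.

Lemma box_vol_gt0 : 0 < box_vol a b.
Proof. by apply: prodr_gt0 => i _; exact: box_side_gt0. Qed.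

Lemma normalization_ge t : 0 < t ->
  \sum_(x \in Omega) t * phi x * hvol h = 1 -> 1 <= t * box_vol a b.
Proof.
move=> t_gt0 <-; have hvol_gt0 : 0 < hvol h by apply: prodr_gt0.
rewrite box_volE mulrCA; apply: fsbig_Omega_h_le => [|x _].
  by rewrite mulr_ge0 ?ltW.
by rewrite ler_pM2r // ler_piMr ?(ltW t_gt0) ?phi1h_le1.
Qed.

Lemma shift_to_face_bdry {x} i {c} : Omega x -> c = a i \/ c = b i ->
  bdry (shift x i (c - x i)).
Proof.
move=> Ox hc; split; [|split].
- move=> j; rewrite ffunE; case: (j =P i) => [->|_].
    by rewrite addrC subrK; case: hc => ->; [exists (k i) | exists (l i)].
  by have [z ->] := Ox.1 j; exists z; rewrite addr0.
- move=> j; rewrite ffunE; case: (j =P i) => [->|_].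
    rewrite addrC subrK; have := box_side_gt0 i.
    by case: hc => -> ?; apply/andP; split; lra.
  by have /andP[lo hi] := Ox.2 j; rewrite addr0 !ltW.
- by exists i; rewrite ffunE eqxx addrC subrK.
Qed.

Lemma dist_bdry_le {x} i : Omega x ->
  dist_bdry h a b x <= x i - a i /\ dist_bdry h a b x <= b i - x i.
Proof.
move=> Ox; have /andP[lo hi] := Ox.2 i.
have Da := dist_bdry_le_eucl_dist x (shift_to_face_bdry i Ox (or_introl erefl)).
have Db := dist_bdry_le_eucl_dist x (shift_to_face_bdry i Ox (or_intror erefl)).
have xa : 0 <= x i - a i by rewrite subr_ge0 ltW.
have bx : 0 <= b i - x i by rewrite subr_ge0 ltW.
rewrite !eucl_dist_shift in Da Db; rewrite distrC (ger0_norm xa) in Da.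
by rewrite (ger0_norm bx) in Db.
Qed.

Lemma dist_bdry_ge0 {x} (i : 'I_n) : Omega x -> 0 <= dist_bdry h a b x.
Proof.
move=> Ox; have face := shift_to_face_bdry i Ox (or_introl erefl).
apply: lb_le_inf; last by move=> d [y _ ->]; apply: sqrtr_ge0.
by exists (eucl_dist x (shift x i (a i - x i))), (shift x i (a i - x i)).
Qed.

Lemma phi1h_ge_dist_bdry x : Omega x ->
  2 ^+ n * dist_bdry h a b x ^+ n / box_vol a b <= phi x.
Proof.
move=> Ox.
have -> : 2 ^+ n * dist_bdry h a b x ^+ n / box_vol a b =
    \prod_i (2 * dist_bdry h a b x / (b i - a i)).
  by rewrite prodf_div big_split /= /box_vol !prodr_const card_ord.
apply: ler_prod => i _; have D0 := dist_bdry_ge0 i Ox.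
have [D_le_a D_le_b] := dist_bdry_le i Ox.
rewrite divr_ge0 ?mulr_ge0 ?(ltW (box_side_gt0 i)) //=.
by apply: sin_frac_ge => //; [exact: box_side_gt0 | lra].
Qed.

Lemma normalized_phi1h_ge t : 0 < t ->
  \sum_(x \in Omega) t * phi x * hvol h = 1 -> forall x, Omega x ->
  2 ^+ n / box_vol a b ^+ 2 * dist_bdry h a b x ^+ n <= t * phi x.
Proof.
move=> t_gt0 normalized x Ox; have vol_gt0 := box_vol_gt0.
have -> : 2 ^+ n / box_vol a b ^+ 2 * dist_bdry h a b x ^+ n =
    (box_vol a b)^-1 * (2 ^+ n * dist_bdry h a b x ^+ n / box_vol a b).
  by field; rewrite gt_eqF.
apply: (@le_trans _ _ ((box_vol a b)^-1 * phi x)).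
  by apply: ler_wpM2l; [rewrite invr_ge0 ltW | exact: phi1h_ge_dist_bdry].
apply: ler_wpM2r; first exact/ltW/phi1h_gt0.
by rewrite -div1r ler_pdivrMr // normalization_ge.
Qed.

End Box.

Theorem mainTheorem4 (R : realType) (n : nat) (h a b : 'I_n -> R)
    (k l : 'I_n -> int) :
  (0 < n)%N ->
  (forall i, 0 < h i) ->
  (forall i, a i = (k i)%:~R * h i) ->
  (forall i, b i = (l i)%:~R * h i) ->
  (forall i, 1 < l i - k i) ->
  (* (i) *)
  (lambda1h h a b < lambda1 a b /\
   dirichlet_eigenpair h a b (lambda1h h a b) (phi1h a b) /\
   (forall x, Omega_h h a b x -> 0 < phi1h a b x) /\
   (* first eigenvalue: no eigenvalue below lambda1h *)
   (forall lam u, dirichlet_eigenpair h a b lam u -> lambda1h h a b <= lam) /\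
   (* simple: eigenspace spanned by phi1h *)
   (forall u, dirichlet_eigenpair h a b (lambda1h h a b) u ->
      exists c : R, forall x, (Omega_h h a b `|` bdry_h h a b) x ->
        u x = c * phi1h a b x)) /\
  (* (ii) *)
  (forall t : R, 0 < t ->
     \sum_(x \in Omega_h h a b) t * phi1h a b x * hvol h = 1 ->
     forall x, Omega_h h a b x ->
       2 ^+ n / box_vol a b ^+ 2 * dist_bdry h a b x ^+ n <= t * phi1h a b x).
Proof.
move=> n_gt0 h_gt0 aE bE kl_gt1.
split; [split; [|split; [|split; [|split]]] |].
- exact: lambda1h_lt_lambda1.
- exact: phi1h_dirichlet_eigenpair.
- exact: phi1h_gt0.
- exact: lambda1h_le_eigenvalue.
- exact: dirichlet_eigenspace_lambda1h.
- exact: normalized_phi1h_ge.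
Qed.
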